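(* Let $k\in(-\infty,0)\cup\{0,\omega\}\subset S^1$ and let $G^{\uparrow}_k=\{A\in O^{(k)}(4,\mathbb{R}) : a_{00}>0\}$ be the orthochronous subgroup of $O^{(k)}(4,\mathbb{R})$. Then $$\sup\left\{ \frac{|\mathbf{a_v}|}{a_{00}} : A\in G^{\uparrow}_k\right\}=c:=\sqrt{|k|}\in[0,\infty],$$ where by convention $\sqrt{|\omega|}=\infty$. That is, in a temporal linear model of spacetime, whose inertial frames have as transition matrices exactly the elements of $G^{\uparrow}_k$, the supremum of the speeds measured between inertial frames is $c$.
   Context: For $A\in GL(4,\mathbb{R})$ write $A=\begin{pmatrix} a_{00} & \mathbf{a_h}\\ \mathbf{a_v}^t & \hat A\end{pmatrix}$ with $a_{00}\in\mathbb{R}$, $\mathbf{a_h},\mathbf{a_v}\in\mathbb{R}^3$, $\hat A$ a $3\times3$ matrix; $|\mathbf{a_v}|$ is the Euclidean norm. If $A$ is the transition matrix (linear part of the affine coordinate change $(t,x)\mapsto(\bar t,\bar x)$) from a frame $R$ to a frame $\bar R$, the velocity of $R$ measured by $\bar R$ is $\mathbf{v}=\mathbf{a_v}/a_{00}$ and its speed is $|\mathbf{v}|$. Let $S^1=\mathbb{R}\cup\{\omega\}$ (extended real line with $\pm\infty$ identified to $\omega$). For $k\in\mathbb{R}$, $I^{(k)}=\mathrm{diag}(k,1,1,1)$ and $O^{(k)}(4,\mathbb{R})=\{A\in GL(4,\mathbb{R}) : (\det A)^2=1,\ A^tI^{(k)}A=I^{(k)}\}$; $O^{(\omega)}(4,\mathbb{R})=\{A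 : A^t\in O^{(0)}(4,\mathbb{R})\}$. *)

From HB Require Import structures.
From mathcomp Require Import all_boot all_order all_algebra.
From mathcomp Require Import boolp classical_sets reals constructive_ereal ereal.
Set Implicit Arguments. Unset Strict Implicit. Unset Printing Implicit Defensive.
Import Order.TTheory GRing.Theory Num.Theory.
Local Open Scope ring_scope.
Local Open Scope classical_set_scope.

Inductive S1 (R : Type) := S1fin of R | S1omega.
Arguments S1omega {R}.

Section Defs.
Variable R : realType.

Definition Ik (k : R) : 'M[R]_4 :=
  diag_mx (\row_(i < 4) (if i == ord0 then k else 1)).

Definition Ok (k : R) : set 'M[R]_4 :=
  [set A | A \in unitmx /\ (\det A) ^+ 2 = 1 /\ A^T *m Ik k *m A = Ik k].

Definition OS1 (k : S1 R) : set 'M[R]_4 :=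
  match k with
  | S1fin r => Ok r
  | S1omega => [set A | A \in unitmx /\ Ok 0 A^T]
  end.

Definition Gup (k : S1 R) : set 'M[R]_4 := [set A | OS1 k A /\ 0 < A ord0 ord0].

Definition a00 (A : 'M[R]_4) : R := A ord0 ord0.
Definition av_norm (A : 'M[R]_4) : R :=
  Num.sqrt (\sum_(i < 3) (A (lift ord0 i) ord0) ^+ 2).

Definition cS1 (k : S1 R) : \bar R :=
  match k with
  | S1fin r => (Num.sqrt `|r|)%:E
  | S1omega => +oo%E
  end.

Definition admissible (k : S1 R) : Prop :=
  match k with
  | S1fin r => r <= 0
  | S1omega => True
  end.
End Defs.

From HB Require Import structures.
From mathcomp Require Import all_boot all_order all_algebra.
From mathcomp Require Import boolp classical_sets reals constructive_ereal ereal.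
From mathcomp Require Import ring lra.
Set Implicit Arguments. Unset Strict Implicit. Unset Printing Implicit Defensive.
Import Order.TTheory GRing.Theory Num.Theory.
Local Open Scope ring_scope.
Local Open Scope classical_set_scope.

(* For real k <= 0, the (0,0) entry of A^T I^(k) A = I^(k) reads
   k a00^2 + |a_v|^2 = k, i.e. |a_v|^2 = |k| (a00^2 - 1) <= |k| a00^2, so no speed
   exceeds sqrt|k|.  Conversely, for k = -c^2 < 0 the Lorentz boost of velocity v,
   |v| < c, lies in the orthochronous group and has speed |v|, while for k = 0 the
   identity already attains the bound 0.  For k = omega the Galilean boosts, whose
   transposes preserve the degenerate form diag(0,1,1,1), realise every speed. *)

Section ExtendedRealSupremum.
Variable R : realType.

Lemma lte_EFin_between (a b : \bar R) : (a < b)%E -> exists y : R, (a < y%:E < b)%E.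
Proof.
case: a b => [a||] [b||] //= ab.
- by exists ((a + b) / 2); rewrite !lte_fin !midf_lt.
- by exists (a + 1); rewrite lte_fin ltry ltrDl ltr01.
- by exists (b - 1); rewrite ltNyr lte_fin gtrBl ltr01.
- by exists 0; rewrite ltNyr ltry.
Qed.

Lemma ereal_sup_EFin_image_eq (T : Type) (S : set T) (f : T -> R) (c : \bar R) :
  (forall x, S x -> ((f x)%:E <= c)%E) ->
  (forall y : R, (y%:E < c)%E -> exists2 x, S x & y <= f x) ->
  ereal_sup [set (f x)%:E | x in S] = c.
Proof.
move=> ub approx; apply/eqP; rewrite eq_le; apply/andP; split.
  by apply: ge_ereal_sup => _ [x Sx <-]; exact: ub.
rewrite leNgt; apply/negP => /lte_EFin_between [y /andP [sup_lt_y y_lt_c]].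
have [x Sx y_le_fx] := approx y y_lt_c.
have fx_le_sup : ((f x)%:E <= ereal_sup [set (f x)%:E | x in S])%E.
  by apply: ereal_sup_ubound; exists x.
by have := le_lt_trans fx_le_sup sup_lt_y; rewrite lte_fin ltNge y_le_fx.
Qed.

End ExtendedRealSupremum.

Section OrthochronousGroups.
Variable R : realType.
Implicit Types (r a b x y c v : R) (A : 'M[R]_4).

Lemma mx_Ik_formE r A i j :
  (A^T *m Ik r *m A) i j = \sum_l A l i * (if l == ord0 then r else 1) * A l j.
Proof. by rewrite /Ik mul_mx_diag !mxE; apply: eq_bigr => l _; rewrite !mxE. Qed.

Lemma av_norm_ge0 A : 0 <= av_norm A.
Proof. exact: sqrtr_ge0. Qed.

Lemma av_norm_sqr A : av_norm A ^+ 2 = \sum_(i < 3) A (lift ord0 i) ord0 ^+ 2.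
Proof. by rewrite sqr_sqrtr // sumr_ge0 // => i _; exact: sqr_ge0. Qed.

Lemma Ik_form_a00 r A : A^T *m Ik r *m A = Ik r -> r * a00 A ^+ 2 + av_norm A ^+ 2 = r.
Proof.
move=> /(congr1 (fun M : 'M[R]_4 => M ord0 ord0)).
rewrite mx_Ik_formE big_ord_recl /Ik !mxE eqxx mulr1n => entry.
rewrite -[X in _ = X]entry av_norm_sqr /a00; congr (_ + _); first ring.
by apply: eq_bigr => i _; rewrite eq_sym (negPf (neq_lift _ _)) mulr1.
Qed.

Lemma speed_le_sqrt r A : r <= 0 -> A^T *m Ik r *m A = Ik r -> 0 < a00 A ->
  av_norm A / a00 A <= Num.sqrt `|r|.
Proof.
move=> r_le0 /Ik_form_a00 form a_gt0.
have sqr_le : av_norm A ^+ 2 <= (Num.sqrt `|r| * a00 A) ^+ 2.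
  by rewrite exprMn (sqr_sqrtr (normr_ge0 r)) ler0_norm //; nra.
have rhs_ge0 : 0 <= Num.sqrt `|r| * a00 A by rewrite mulr_ge0 ?sqrtr_ge0 ?ltW.
by rewrite ler_pdivrMr // -ler_sqr ?nnegrE ?av_norm_ge0.
Qed.

Lemma det_sqr_Ik_form r A : r != 0 -> A^T *m Ik r *m A = Ik r -> \det A ^+ 2 = 1.
Proof.
move=> r_neq0 /(congr1 determinant); rewrite !det_mulmx det_tr.
have -> : \det (Ik r) = r.
  by rewrite det_diag !big_ord_recl big_ord0 !mxE /= !mulr1.
by move=> form; apply: (mulIf r_neq0); rewrite mul1r -{2}form; ring.
Qed.

Lemma Ok_intro r A : \det A ^+ 2 = 1 -> A^T *m Ik r *m A = Ik r -> Ok r A.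
Proof.
move=> det_sqr form; split=> //.
by rewrite unitmxE unitfE -sqrf_eq0 det_sqr oner_eq0.
Qed.

Lemma Gup1 (k : S1 R) : Gup k 1%:M.
Proof.
have Ok1 r : Ok r 1%:M by apply: Ok_intro; rewrite ?det1 ?expr1n ?trmx1 ?mul1mx ?mulmx1.
split; last by rewrite mxE ltr01.
case: k => [r|] /=; first exact: Ok1.
by split; [exact: unitmx1 | rewrite trmx1; exact: Ok1].
Qed.

Lemma speed1 : av_norm 1%:M / a00 (1%:M : 'M[R]_4) = 0.
Proof.
rewrite /av_norm big1 ?sqrtr0 ?mul0r // => i _.
by rewrite mxE eq_sym (negPf (neq_lift _ _)) expr0n.
Qed.

Definition plane_mx a b x y : 'M[R]_4 := \matrix_(i, j)
  match val i, val j with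
  | 0, 0 => a | 0, 1 => b | 1, 0 => x | 1, 1 => y
  | _, _ => (val i == val j)%:R
  end%N.

Lemma plane_mx_tr a b x y : (plane_mx a b x y)^T = plane_mx a x b y.
Proof.
apply/matrixP => i j; rewrite !mxE.
by case: i => [[|[|[|[|?]]]] ?]; case: j => [[|[|[|[|?]]]] ?].
Qed.

Lemma det_plane_mx_lower a x y : \det (plane_mx a 0 x y) = a * y.
Proof.
rewrite det_trig; first by rewrite !big_ord_recl big_ord0 !mxE /= !mulr1.
apply/is_trig_mxP => i j.
by case: i => [[|[|[|[|?]]]] ?]; case: j => [[|[|[|[|?]]]] ?] //= _; rewrite mxE.
Qed.

Lemma a00_plane_mx a b x y : a00 (plane_mx a b x y) = a.
Proof. by rewrite /a00 mxE. Qed.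

Lemma av_norm_plane_mx a b x y : av_norm (plane_mx a b x y) = `|x|.
Proof. by rewrite /av_norm !big_ord_recl big_ord0 !mxE /= expr0n /= !addr0 sqrtr_sqr. Qed.

Lemma plane_mx_Ik_form r a b x y :
  r * a ^+ 2 + x ^+ 2 = r -> r * a * b + x * y = 0 -> r * b ^+ 2 + y ^+ 2 = 1 ->
  (plane_mx a b x y)^T *m Ik r *m plane_mx a b x y = Ik r.
Proof.
move=> e00 e01 e11; apply/matrixP => i j.
rewrite mx_Ik_formE !big_ord_recl big_ord0 /Ik !mxE /=.
by case: i => [[|[|[|[|?]]]] ?]; case: j => [[|[|[|[|?]]]] ?] //=; rewrite ?mxE /=; lra.
Qed.

Definition lorentz_factor c v : R := (Num.sqrt (1 - (v / c) ^+ 2))^-1.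

Definition lorentz_boost c v : 'M[R]_4 :=
  let g := lorentz_factor c v in plane_mx g (g * v / c ^+ 2) (g * v) g.

Definition galilean_boost v : 'M[R]_4 := plane_mx 1 0 v 1.

Section LorentzBoost.
Variables c v : R.
Hypothesis c_gt0 : 0 < c.
Hypothesis v_lt_c : `|v| < c.

Let one_sub_gt0 : 0 < 1 - (v / c) ^+ 2.
Proof.
rewrite subr_gt0 expr_div_n ltr_pdivrMr ?exprn_gt0 // mul1r -real_normK ?num_real //.
by rewrite ltr_sqr ?nnegrE ?normr_ge0 ?ltW.
Qed.

Lemma lorentz_factor_gt0 : 0 < lorentz_factor c v.
Proof. by rewrite invr_gt0 sqrtr_gt0. Qed.

Lemma lorentz_factor_sqr : lorentz_factor c v ^+ 2 * (1 - (v / c) ^+ 2) = 1.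
Proof. by rewrite exprVn sqr_sqrtr ?ltW // mulVf ?gt_eqF. Qed.

Lemma lorentz_boost_Gup : Gup (S1fin (- c ^+ 2)) (lorentz_boost c v).
Proof.
have c_neq0 : c != 0 by rewrite gt_eqF.
have r_neq0 : - c ^+ 2 != 0 by rewrite oppr_eq0 expf_neq0.
split; last by rewrite mxE lorentz_factor_gt0.
have form : (lorentz_boost c v)^T *m Ik (- c ^+ 2) *m lorentz_boost c v = Ik (- c ^+ 2).
  have g_sqr := lorentz_factor_sqr; apply: plane_mx_Ik_form.
  - by rewrite -[RHS]mulr1 -[in RHS]g_sqr; field.
  - by field.
  - by rewrite -g_sqr; field.
by apply: Ok_intro => //; exact: det_sqr_Ik_form form.
Qed.

Lemma lorentz_boost_speed : av_norm (lorentz_boost c v) / a00 (lorentz_boost c v) = `|v|.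
Proof.
rewrite av_norm_plane_mx a00_plane_mx normrM gtr0_norm ?lorentz_factor_gt0 //.
by rewrite mulrAC divff ?mul1r // gt_eqF // lorentz_factor_gt0.
Qed.

End LorentzBoost.

Lemma galilean_boost_Gup v : Gup S1omega (galilean_boost v).
Proof.
have det_boost : \det (galilean_boost v) = 1 by rewrite det_plane_mx_lower mulr1.
split; last by rewrite mxE ltr01.
split; first by rewrite unitmxE det_boost unitr1.
apply: Ok_intro; first by rewrite det_tr det_boost expr1n.
by rewrite /galilean_boost plane_mx_tr; apply: plane_mx_Ik_form; lra.
Qed.

Lemma galilean_boost_speed v : av_norm (galilean_boost v) / a00 (galilean_boost v) = `|v|.
Proof. by rewrite av_norm_plane_mx a00_plane_mx divr1. Qed.

End OrthochronousGroups.

Theorem mainTheorem3 (R : realType) (k : S1 R) :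
  admissible k ->
  ereal_sup [set ((av_norm A / a00 A)%:E)%E | A in Gup k] = cS1 k.
Proof.
case: k => [r|] /= r_le0; apply: ereal_sup_EFin_image_eq.
- by move=> A [[_ [_ form]] a_gt0]; rewrite lee_fin; exact: speed_le_sqrt.
- move=> y; rewrite lte_fin => y_lt_c.
  have [r0 | r_neq0] := eqVneq r 0.
    rewrite r0 normr0 sqrtr0 in y_lt_c.
    by exists 1%:M; [exact: Gup1 | rewrite speed1 ltW].
  set c := Num.sqrt `|r|.
  have c_gt0 : 0 < c by rewrite sqrtr_gt0 normr_gt0.
  have r_eq : r = - c ^+ 2 by rewrite sqr_sqrtr ?normr_ge0 // ler0_norm ?opprK.
  have v_lt_c : `|Num.max 0 y| < c by rewrite ger0_norm ?le_max ?lexx // gt_max c_gt0.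
  exists (lorentz_boost c (Num.max 0 y)).
    by have := lorentz_boost_Gup c_gt0 v_lt_c; rewrite -r_eq.
  by rewrite lorentz_boost_speed // ger0_norm ?le_max ?lexx ?orbT.
- by move=> A _; rewrite leey.
- move=> y _; exists (galilean_boost y); first exact: galilean_boost_Gup.
  by rewrite galilean_boost_speed ler_norm.
Qed.
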